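(* Bilocal Classical Theory (BCT) is a digitizable theory. (In fact every nontrivial system of BCT can serve as obit.)
   Context: BCT is an operational probabilistic theory with the following structure. Systems: a trivial system and, for every integer $D>1$, exactly one system of size $D$. For a nontrivial system $\mathrm A$ of size $D_{\mathrm A}$, every state is a nonnegative combination of the $D_{\mathrm A}$ pure states $|i)_{\mathrm A}$, the vertices of the simplex of deterministic states. For nontrivial $\mathrm A,\mathrm B$, the composite $\mathrm{AB}$ has size $2D_{\mathrm A}D_{\mathrm B}$ with pure states $|(ij)_s)_{\mathrm{AB}}$, $s\in\{+,-\}$, $|i)\boxtimes|j)=\tfrac12\sum_s|(ij)_s)$, and $((ij)_{s_1}k)_{s_2}=(i(jk)_{s_1s_2})_{s_1}$. Transformations act linearly, and identity transformations are denoted $\mathcal I$. Channels $\mathcal C\in\mathsf{Tr}_1(\mathrm E\to\mathrm F)$ between nontrivial systems are exactly those for which, for each $j\in\{1,\dots,D_{\mathrm E}\}$, there is a probability distribution $\{\lambda^{(j)}_{m\tau}\}$ over $(m,\tau)\in\{1,\dots,D_{\mathrm F}\}\times\{\pm\}$ with $(\mathcal I_{\mathrm A}\boxtimes\mathcal C)|(ij)_s)_{\mathrm{AE}}=\sum_{m,\tau}\lambda^{(j)}_{m\tau}|(im)_{\tau s})_{\mathrm{AF}}$ for every system $\mathrm A$ (signs multiply as $\pm1$). $\mathrm X^{\boxtimes k}$ denotes the composite of $k$ copies of $\mathrm X$. Two systems $\mathrm A_1,\mathrm A_2$ are asymptotically equivalent if: (1) there are integers $k_1,k_2<\infty$ and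 channels $\mathcal E\in\mathsf{Tr}_1(\mathrm A_1^{\boxtimes k_1}\to\mathrm A_2^{\boxtimes k_2})$, $\mathcal D\in\mathsf{Tr}_1(\mathrm A_2^{\boxtimes k_2}\to\mathrm A_1^{\boxtimes k_1})$ with $\mathcal D\mathcal E=\mathcal I_{\mathrm A_1^{\boxtimes k_1}}$; (2) symmetrically there are $h_1,h_2$ and channels $\mathcal G\in\mathsf{Tr}_1(\mathrm A_2^{\boxtimes h_2}\to\mathrm A_1^{\boxtimes h_1})$, $\mathcal F\in\mathsf{Tr}_1(\mathrm A_1^{\boxtimes h_1}\to\mathrm A_2^{\boxtimes h_2})$ with $\mathcal F\mathcal G=\mathcal I_{\mathrm A_2^{\boxtimes h_2}}$; (3) letting $M_2^{\min}(k_1)$ be the smallest $k_2$ for which (1) holds given $k_1$, and $M_1^{\min}(h_2)$ the smallest $h_1$ for which (2) holds given $h_2$, there is $k$ with $\lim_{k_1\to\infty}M_2^{\min}(k_1)/k_1=k$ and $\lim_{h_2\to\infty}M_1^{\min}(h_2)/h_2=k^{-1}$. A theory is digitizable if there exists a system $\mathrm B$ (an obit) such that for every system $\mathrm X$ there are $k<\infty$ and channels $\mathcal C\in\mathsf{Tr}_1(\mathrm X\to\mathrm B^{\boxtimes k})$, $\mathcal F\in\mathsf{Tr}_1(\mathrm B^{\boxtimes k}\to\mathrm X)$ with $\mathcal F\mathcal C=\mathcal I_{\mathrm X}$, and moreover any two systems with this property are asymptotically equivalent. *)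

From HB Require Import structures.
From mathcomp Require Import all_boot all_order all_algebra.
From mathcomp Require Import reals.
Set Implicit Arguments. Unset Strict Implicit. Unset Printing Implicit Defensive.
Import Order.TTheory GRing.Theory Num.Theory.
Local Open Scope ring_scope.

(* A nontrivial system is determined by its size D > 1 (exactly one system
   per size); its pure states are labelled by 'I_D. *)
Record ntsys := NT { dim : nat; dim_gt1 : (1 < dim)%N }.

Inductive sys := Triv | NTriv of ntsys.

Lemma comp_dim_gt1 (a b : ntsys) : (1 < 2 * dim a * dim b)%N.
Proof.
case: a b => a Ha [b Hb] /=.
rewrite -mulnA; have Hab : (0 < a * b)%N by rewrite muln_gt0 (ltnW Ha) (ltnW Hb).
by rewrite mul2n -addnn -addn1 leq_add.
Qed.

Definition scomp (X Y : sys) : sys :=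
  match X, Y with
  | Triv, _ => Y
  | _, Triv => X
  | NTriv a, NTriv b => NTriv (NT (comp_dim_gt1 a b))
  end.

Fixpoint spow (X : sys) (k : nat) : sys :=
  match k with 0 => Triv | k'.+1 => scomp (spow X k') X end.

Section BCT.
Variable R : realType.

(* A table lam j m tau  =  lambda^{(j)}_{m tau}; the sign + is encoded as
   false, - as true, so that sign multiplication is addb (xor). *)
Definition table (DE DF : nat) := 'I_DE -> 'I_DF -> bool -> R.

Definition is_channel_table DE DF (lam : table DE DF) : Prop :=
  (forall j m t, 0 <= lam j m t) /\
  (forall j, \sum_(m < DF) \sum_(t : bool) lam j m t = 1).

(* Vectors in the linear span of the pure states |(ij)_s) of the composite AE
   (A of size DA, E of size DE). *)
Definition cvec (DA DE : nat) := 'I_DA -> 'I_DE -> bool -> R.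

Definition pure DA DE (i : 'I_DA) (j : 'I_DE) (s : bool) : cvec DA DE :=
  fun i' j' s' => ((i' == i) && (j' == j) && (s' == s))%:R.

(* Linear action of I_A ⊠ C, where C has table lam:
   (I_A ⊠ C) |(ij)_s) = \sum_{m,tau} lam^{(j)}_{m tau} |(im)_{tau s}). *)
Definition act DA DE DF (lam : table DE DF) (v : cvec DA DE) : cvec DA DF :=
  fun i m t => \sum_(j < DE) \sum_(s : bool) v i j s * lam j m (addb t s).

(* D ∘ E = I_E : equality of transformations, tested on all pure states of
   every composite A E with A nontrivial. *)
Definition comp_is_id DE DF (lC : table DE DF) (lF : table DF DE) : Prop :=
  forall DA : nat, (1 < DA)%N ->
  forall (i : 'I_DA) (j : 'I_DE) (s : bool) i' j' s',
    act lF (act lC (pure i j s)) i' j' s' = pure i j s i' j' s'.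

(* ---------- "X encodes into Y": exist C in Tr_1(X -> Y), F in Tr_1(Y -> X)
   with F C = I_X. ---------- *)
Definition is_state (D : nat) (p : 'I_D -> R) : Prop :=
  (forall m, 0 <= p m) /\ \sum_(m < D) p m = 1.

Definition encodes (X Y : sys) : Prop :=
  match X, Y with
  | Triv, Triv => True  (* C = F = identity of the trivial system *)
  | Triv, NTriv f =>
      (* C = a deterministic state p of Y, F = the deterministic effect u;
         F C = u(p) = \sum_m p m must equal 1 = I_Triv *)
      exists p : 'I_(dim f) -> R, is_state p /\ \sum_(m < dim f) p m = 1
  | NTriv e, Triv =>
      (* C = deterministic effect, F = a deterministic state p; F C maps every
         pure state |j) of X to p, so it must equal |j) for every j *)
      exists p : 'I_(dim e) -> R, is_state p /\
        forall j m : 'I_(dim e), p m = (m == j)%:R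
  | NTriv e, NTriv f =>
      exists (lC : table (dim e) (dim f)) (lF : table (dim f) (dim e)),
        is_channel_table lC /\ is_channel_table lF /\ comp_is_id lC lF
  end.

Definition is_min_pos (P : nat -> Prop) (m : nat) : Prop :=
  (1 <= m)%N /\ P m /\ forall m', (1 <= m')%N -> (m' < m)%N -> ~ P m'.

Definition min_ratio_limit (P : nat -> nat -> Prop) (c : R) : Prop :=
  forall eps : R, 0 < eps -> exists N : nat, forall n : nat, (N <= n)%N ->
    exists m : nat, is_min_pos (P n) m /\ `| m%:R / n%:R - c | < eps.

Definition asymp_equiv (A1 A2 : sys) : Prop :=
  (exists k1 k2 : nat, [/\ (1 <= k1)%N, (1 <= k2)%N &
        encodes (spow A1 k1) (spow A2 k2)]) /\
  (exists h1 h2 : nat, [/\ (1 <= h1)%N, (1 <= h2)%N &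
        encodes (spow A2 h2) (spow A1 h1)]) /\
  (exists k : R, k != 0 /\
     min_ratio_limit (fun k1 k2 => encodes (spow A1 k1) (spow A2 k2)) k /\
     min_ratio_limit (fun h2 h1 => encodes (spow A2 h2) (spow A1 h1)) k^-1).

Definition obit (B : sys) : Prop :=
  forall X : sys, exists k : nat, (1 <= k)%N /\ encodes X (spow B k).

Definition digitizable : Prop :=
  exists B : sys, obit B /\
    forall B1 B2 : sys, obit B1 -> obit B2 -> asymp_equiv B1 B2.

End BCT.

From HB Require Import structures.
From mathcomp Require Import all_boot all_order all_algebra.
From mathcomp Require Import reals exp ring lra zify.

(* A channel [C : E -> F] with a left inverse [G] forces [D_E <= D_F]: every
   input [j] gives positive weight to some output [(m, tau)], and since [G C]
   returns [j] with certainty, [G] must send [(m, tau)] back to [j] with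
   probability one; hence [j |-> m] is injective.  Conversely, an injection
   with a retraction yields deterministic channels.  As [B^{⊠k}] has size
   [(2 D_B)^k / 2], the system [B^{⊠k}] encodes into [B'^{⊠h}] iff
   [(2 D_B)^k <= (2 D_B')^h], so the minimal ratio [h / k] tends to
   [ln (2 D_B) / ln (2 D_B')].  The trivial system is no obit, since it cannot
   encode a nontrivial one. *)

Set Implicit Arguments. Unset Strict Implicit. Unset Printing Implicit Defensive.
Import Order.TTheory GRing.Theory Num.Theory.
Local Open Scope ring_scope.

Section NonnegSums.
Variable R : numDomainType.

Lemma ler_sum_term (I : finType) (P : pred I) (F : I -> R) x :
  P x -> (forall i, P i -> 0 <= F i) -> F x <= \sum_(i | P i) F i.
Proof.
by move=> Px F0; rewrite (bigD1 x) //= lerDl sumr_ge0 // => i /andP[/F0].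
Qed.

Lemma lerD_sum_pair (I : finType) (F : I -> R) x y :
  x != y -> (forall i, 0 <= F i) -> F x + F y <= \sum_i F i.
Proof.
move=> xy F0; rewrite (bigD1 x) //= lerD2l.
by apply: ler_sum_term; rewrite // eq_sym.
Qed.

End NonnegSums.

Section Channels.
Variable R : realType.

Lemma channel_row_sum DE DF (lam : table R DE DF) j :
  is_channel_table lam -> \sum_(p : 'I_DF * bool) lam j p.1 p.2 = 1.
Proof. by case=> _ /(_ j); rewrite pair_bigA. Qed.

Lemma channel_row_nonzero DE DF (lam : table R DE DF) j :
  is_channel_table lam -> exists p : 'I_DF * bool, lam j p.1 p.2 != 0.
Proof.
move=> lamP; have sum_neq0 : \sum_(p : 'I_DF * bool) lam j p.1 p.2 <> 0.
  by rewrite channel_row_sum // => /eqP; rewrite oner_eq0.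
have [p /andP[_ pos]] := psumr_neq0P (fun p _ => lamP.1 j p.1 p.2) sum_neq0.
by exists p; rewrite gt_eqF.
Qed.

Lemma act_pure DA DE DF (lam : table R DE DF) (i : 'I_DA) j s i' m t :
  act lam (pure R i j s) i' m t = (i' == i)%:R * lam j m (addb t s).
Proof.
rewrite /act (bigD1 j) //= [X in _ + X]big1 ?addr0 => [|j' /negbTE nj].
  rewrite big_bool /pure !eqxx !andbT.
  by case: (i' == i); case: s; rewrite /= ?mul1r ?mul0r ?addr0 ?add0r.
by apply: big1 => s' _; rewrite /pure nj andbF mul0r.
Qed.

Lemma act_act_pure DA DE DF (lC : table R DE DF) (lF : table R DF DE)
    (i : 'I_DA) j s i' j' s' :
  act lF (act lC (pure R i j s)) i' j' s' =
  (i' == i)%:R *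
    \sum_(m < DF) \sum_(t : bool) lC j m (addb t s) * lF m j' (addb s' t).
Proof.
rewrite /act mulr_sumr; apply: eq_bigr => m _; rewrite mulr_sumr.
apply: eq_bigr => t _.
by rewrite -/(act lC (pure R i j s) i' m t) act_pure mulrA.
Qed.

Lemma comp_is_id_return DE DF (lC : table R DE DF) (lF : table R DF DE) j :
  comp_is_id lC lF ->
  \sum_(p : 'I_DF * bool) lC j p.1 p.2 * lF p.1 j p.2 = 1.
Proof.
move=> /(_ 2%N isT ord0 j false ord0 j false).
rewrite act_act_pure /pure !eqxx /= mul1r pair_bigA => E.
by apply: etrans E; apply: eq_bigr => -[m t] _; rewrite addbF.
Qed.

Section Retraction.
Variables (DE DF : nat) (lC : table R DE DF) (lF : table R DF DE).
Hypotheses (lCP : is_channel_table lC) (lFP : is_channel_table lF)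
  (lFlC : comp_is_id lC lF).

Lemma retraction_support j (p : 'I_DF * bool) :
  lC j p.1 p.2 != 0 -> lF p.1 j p.2 = 1.
Proof.
move=> nz.
have lF_le1 q : lF q.1 j q.2 <= 1.
  rewrite -(channel_row_sum q.1 lFP).
  exact: (ler_sum_term (F := fun r => lF q.1 r.1 r.2) (x := (j, q.2))
    (P := xpredT) isT (fun r _ => lFP.1 _ _ _)).
have loss_ge0 q : 0 <= lC j q.1 q.2 * (1 - lF q.1 j q.2).
  by rewrite mulr_ge0 ?subr_ge0 //; apply: lCP.1.
have loss : \sum_(q : 'I_DF * bool) lC j q.1 q.2 * (1 - lF q.1 j q.2) = 0.
  under eq_bigr do rewrite mulrBr mulr1.
  by rewrite sumrB channel_row_sum // comp_is_id_return // subrr.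
move/eqP: (psumr_eq0P (fun q _ => loss_ge0 q) loss (i := p) isT).
by rewrite mulf_eq0 (negbTE nz) subr_eq0 => /eqP <-.
Qed.

Lemma retraction_dim_le : (DE <= DF)%N.
Proof.
pose h j := xchoose (channel_row_nonzero j lCP).
have back j : lF (h j).1 j (h j).2 = 1.
  exact/retraction_support/(xchooseP (channel_row_nonzero j lCP)).
have h_inj : injective (fun j => (h j).1).
  move=> j1 j2 /= h12; apply/eqP/negPn/negP => j12.
  have := lerD_sum_pair (F := fun q => lF (h j1).1 q.1 q.2)
    (x := (j1, (h j1).2)) (y := (j2, (h j2).2)).
  rewrite /= back h12 back channel_row_sum // xpair_eqE negb_and j12.
  by move=> /(_ isT (fun q => lFP.1 _ _ _)); lra.
by have := leq_card _ h_inj; rewrite !card_ord.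
Qed.

End Retraction.

Definition det_table DE DF (f : 'I_DE -> 'I_DF) : table R DE DF :=
  fun j m t => ((m == f j) && ~~ t)%:R.

Lemma det_table_channel DE DF (f : 'I_DE -> 'I_DF) :
  is_channel_table (det_table f).
Proof.
split=> [*|j]; first exact: ler0n.
rewrite (bigD1 (f j)) //= [X in _ + X]big1 ?addr0 => [|m /negbTE nm].
  by rewrite big_bool /det_table eqxx /= add0r.
by apply: big1 => t _; rewrite /det_table nm.
Qed.

Lemma comp_is_id_det DE DF (f : 'I_DE -> 'I_DF) (g : 'I_DF -> 'I_DE) :
  cancel f g -> comp_is_id (det_table f) (det_table g).
Proof.
move=> fK DA _ i j s i' j' s'; rewrite act_act_pure.
rewrite (bigD1 (f j)) //= [X in _ + X]big1 ?addr0 => [|m /negbTE nm]; last first.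
  by apply: big1 => t _; rewrite /det_table nm mul0r.
rewrite big_bool /det_table /pure eqxx fK.
by case: (i' == i); case: (j' == j); case: s; case: s';
  rewrite /= ?mul0r ?mul1r ?addr0 ?add0r.
Qed.

Lemma encodes_ntriv e f : encodes R (NTriv e) (NTriv f) <-> (dim e <= dim f)%N.
Proof.
split=> [[lC [lF [lCP [lFP lFlC]]]]|le_ef]; first exact: retraction_dim_le lFlC.
pose j0 : 'I_(dim e) := Ordinal (ltnW (dim_gt1 e)).
have fK : cancel (widen_ord le_ef) (fun m : 'I_(dim f) => insubd j0 (val m)).
  by move=> j; apply: val_inj; rewrite val_insubd /= ltn_ord.
by exists (det_table (widen_ord le_ef)), (det_table (insubd j0 \o val));
  split; [|split]; [apply: det_table_channel..|apply: comp_is_id_det].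
Qed.

End Channels.

Lemma spow_ntriv (B : ntsys) n : exists e, spow (NTriv B) n.+1 = NTriv e /\
  (2 * dim e = (2 * dim B) ^ n.+1)%N.
Proof.
elim: n => [|n [e [Be De]]]; first by exists B; rewrite expn1.
exists (NT (comp_dim_gt1 e B)); rewrite /= -/(spow (NTriv B) n.+1) Be.
by split=> //=; rewrite expnS -De; lia.
Qed.

Lemma spow_triv k : spow Triv k = Triv.
Proof. by elim: k => //= k ->. Qed.

Section Asymptotics.
Variable R : realType.

Definition ln_size (B : ntsys) : R := ln (2 * dim B)%:R.

Lemma ln_size_gt0 B : 0 < ln_size B.
Proof. by rewrite ln_gt0 // ltr1n; have := dim_gt1 B; lia. Qed.

Lemma leq_expn_ln (x y n m : nat) : (0 < x)%N -> (0 < y)%N ->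
  (x ^ n <= y ^ m)%N = (n%:R * ln (x%:R : R) <= m%:R * ln (y%:R : R)).
Proof.
move=> x_gt0 y_gt0; rewrite -(ler_nat R) !natrX !mulr_natl -!lnXn ?ltr0n //.
by rewrite ler_ln ?posrE ?exprn_gt0 ?ltr0n.
Qed.

Lemma encodes_spow_ratio A B n m : (0 < n)%N -> (0 < m)%N ->
  encodes R (spow (NTriv A) n) (spow (NTriv B) m) <->
  n%:R * (ln_size A / ln_size B) <= m%:R.
Proof.
case: n m => [|n] [|m] // _ _.
have [e [-> De]] := spow_ntriv A n; have [f [-> Df]] := spow_ntriv B m.
rewrite encodes_ntriv -(leq_pmul2l (isT : (0 < 2)%N)) De Df.
rewrite leq_expn_ln ?muln_gt0 ?(ltnW (dim_gt1 _)) //.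
by rewrite mulrA ler_pdivrMr ?ln_size_gt0.
Qed.

Lemma min_pos_threshold (P : nat -> Prop) (a : R) : 0 < a ->
  (forall m, (0 < m)%N -> P m <-> a <= m%:R) ->
  exists m, is_min_pos P m /\ a <= m%:R < a + 1.
Proof.
move=> a_gt0 PE; pose Q m := (0 < m)%N && (a <= m%:R).
have exQ : exists m, Q m.
  by exists (Num.truncn a).+1; rewrite /Q ltW // truncnS_gt.
case: (ex_minnP exQ) => m /andP[m_gt0 am] m_min; exists m.
have m_lt : m%:R < a + 1.
  case: m m_gt0 am m_min => [|[|k]] // _ am m_min; first by rewrite ltrDr.
  rewrite -natr1 ltrD2r ltNge; apply/negP => ak.
  by have := m_min k.+1; rewrite /Q ak ltnn => /(_ isT).
split; last by rewrite am m_lt.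
split=> //; split=> [|m' m'_gt0 ltm' /(PE _ m'_gt0) am']; first exact/PE.
by have := m_min m'; rewrite /Q m'_gt0 am' leqNgt ltm' => /(_ isT).
Qed.

Lemma min_ratio_limit_threshold (P : nat -> nat -> Prop) (c : R) : 0 < c ->
  (forall n m, (0 < n)%N -> (0 < m)%N -> P n m <-> n%:R * c <= m%:R) ->
  min_ratio_limit P c.
Proof.
move=> c_gt0 PE eps eps_gt0; exists (Num.truncn eps^-1).+1 => n Nn.
have n_gt0 : (0 < n)%N by apply: leq_trans Nn.
have n_pos : (0 : R) < n%:R by rewrite ltr0n.
have [|m [m_min /andP[ncm mnc]]] :=
  min_pos_threshold (a := n%:R * c) _ (PE n ^~ n_gt0); first by rewrite mulr_gt0.
exists m; split=> //.
have -> : m%:R / n%:R - c = (m%:R - n%:R * c) / n%:R by field; rewrite gt_eqF.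
rewrite ger0_norm ?divr_ge0 ?subr_ge0 ?(ltW n_pos) // ltr_pdivrMr //.
have eps_N : 1 < eps * (Num.truncn eps^-1).+1%:R.
  by rewrite -ltr_pdivrMl // mulr1 truncnS_gt.
have : eps * (Num.truncn eps^-1).+1%:R <= eps * n%:R by rewrite ler_pM2l // ler_nat.
lra.
Qed.

Lemma min_ratio_limit_witness (P : nat -> nat -> Prop) (c : R) :
  min_ratio_limit P c -> exists n m, [/\ (1 <= n)%N, (1 <= m)%N & P n m].
Proof.
move=> /(_ 1 ltr01) [N /(_ N.+1 (leqnSn N)) [m [[m_gt0 [Pm _]] _]]].
by exists N.+1, m.
Qed.

Lemma asymp_equiv_ntriv A B : asymp_equiv R (NTriv A) (NTriv B).
Proof.
have ratio X Y : min_ratio_limit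
    (fun n m => encodes R (spow (NTriv X) n) (spow (NTriv Y) m))
    (ln_size X / ln_size Y).
  by apply: min_ratio_limit_threshold => [|n m n_gt0 m_gt0];
    [rewrite divr_gt0 ?ln_size_gt0 | exact: encodes_spow_ratio].
split; first exact: min_ratio_limit_witness (ratio A B).
split; first by have [n [m []]] := min_ratio_limit_witness (ratio B A); exists m, n.
exists (ln_size A / ln_size B); rewrite invf_div.
by split; [rewrite mulf_neq0 ?invr_eq0 ?gt_eqF ?ln_size_gt0 | split].
Qed.

Lemma obit_ntriv (B : ntsys) : obit R (NTriv B).
Proof.
have dB := dim_gt1 B; case=> [|e].
  exists 1%N; split=> //=; pose j0 : 'I_(dim B) := Ordinal (ltnW dB).
  have sum1 : \sum_(m < dim B) (m == j0)%:R = 1 :> R.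
    by rewrite (bigD1 j0) //= big1 ?addr0 // => m /negbTE ->.
  by exists (fun m => (m == j0)%:R); do !split=> // m; apply: ler0n.
exists (dim e).+1; split=> //; have [f [-> Df]] := spow_ntriv B (dim e).
apply/encodes_ntriv; rewrite -(leq_pmul2l (isT : (0 < 2)%N)) Df expnS.
have dB2 : (1 < 2 * dim B)%N by lia.
by apply: leq_mul; [lia | exact: ltnW (ltn_expl _ dB2)].
Qed.

Lemma not_obit_triv : ~ obit R Triv.
Proof.
move=> /(_ (NTriv (@NT 2 isT))) [k [_]]; rewrite spow_triv => -[p [_ p_pt]].
have := p_pt ord0 ord0; have := p_pt (@Ordinal 2 1 isT) ord0 => -> /eqP.
by rewrite eq_sym oner_eq0.
Qed.

End Asymptotics.

Theorem lemma2 (R : realType) :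
  digitizable R /\ forall B : ntsys, obit R (NTriv B).
Proof.
split; last exact: obit_ntriv.
exists (NTriv (@NT 2 isT)); split; first exact: obit_ntriv.
move=> [|B1] [|B2] B1_obit B2_obit; try by case: (not_obit_triv B1_obit).
- by case: (not_obit_triv B2_obit).
- exact: asymp_equiv_ntriv.
Qed.
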